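(* Fix any total budget $\mathrm{TB}\in\mathbb N_0$ and let $k\in\mathbb N$. Then the disjunctive sum $1/2^k+\overline{1/2^k}=0$.
   Context: Game forms are defined recursively: $G=\{G^{\mathcal L}\mid G^{\mathcal R}\}$ with finite sets of Left and Right options, and finite birthday. $0=\{\varnothing\mid\varnothing\}$, $1=\{0\mid\varnothing\}$. Dyadic game forms: $1/2^0=1$ and for $k\in\mathbb N$, $1/2^k=\{0\mid 1/2^{k-1}\}$. The conjugate is $\bar G=\{\overline{G^{\mathcal R}}\mid\overline{G^{\mathcal L}}\}$. The budget set for total budget $\mathrm{TB}$ is $\mathcal B=\{0,\dots,\mathrm{TB},\hat 0,\dots,\widehat{\mathrm{TB}}\}$: state $p$ (resp. $\hat p$) means Left holds $p$ dollars and Right holds $\mathrm{TB}-p$, and Right (resp. Left) holds the tie-breaking marker. Play of $(G,\tilde p)$: at every position (terminal ones included) both players bid simultaneously, Left $\ell\in\{0,\dots,p\}$, Right $r\in\{0,\dots,\mathrm{TB}-p\}$. If Left holds the marker (state $\hat p$): if $\ell>r$ Left moves to $(G^L,\widehat{p-\ell})$, or, including the marker (allowed when $\ell\ge r$), to $(G^L,p-\ell)$; if $\ell=r$ Left wins, the marker passes to Right, play continues at $(G^L,p-\ell)$; if $\ell<r$ Right moves to $(G^R,\widehat{p+r})$. Symmetrically when Right holds the marker (state $p$): if $r>\ell$ Right moves to $(G^R,p+r)$ or, including the marker, to $(G^R,\widehat{p+r})$; if $r=\ell$ Right wins, the marker passes to Left, play continues at $(G^R,\widehat{p+r})$; if $r<\ell$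 Left moves to $(G^L,p-\ell)$. A player who wins a bid but has no option loses. $o(G,\tilde p)\in\{\mathrm L,\mathrm R\}$ is the winner under optimal play; $\mathrm L>\mathrm R$. Disjunctive sum $G+H=\{G^{\mathcal L}+H,G+H^{\mathcal L}\mid G^{\mathcal R}+H,G+H^{\mathcal R}\}$. $G\ge H$ means $o(G+X,\tilde p)\ge o(H+X,\tilde p)$ for all game forms $X$ and all $\tilde p\in\mathcal B$; $G=H$ means $G\ge H$ and $H\ge G$. *)

From mathcomp Require Import all_boot.
Set Implicit Arguments. Unset Strict Implicit. Unset Printing Implicit Defensive.

Inductive game : Type := Game : seq game -> seq game -> game.

Definition lopts (G : game) : seq game := let: Game l _ := G in l.
Definition ropts (G : game) : seq game := let: Game _ r := G in r.

Definition zero : game := Game [::] [::].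
Definition game_one : game := Game [:: zero] [::].

(* dyad k = 1/2^k :  1/2^0 = 1,  1/2^(k+1) = { 0 | 1/2^k } *)
Fixpoint dyad (k : nat) : game :=
  match k with
  | 0 => game_one
  | k'.+1 => Game [:: zero] [:: dyad k']
  end.

Fixpoint conj (G : game) : game :=
  match G with Game l r => Game (map conj r) (map conj l) end.

Fixpoint gadd (G H : game) {struct G} : game :=
  match G with
  | Game gl gr =>
    (fix addH (H : game) : game :=
       match H with
       | Game hl hr =>
         Game (map (fun x => gadd x H) gl ++ map addH hl)
              (map (fun x => gadd x H) gr ++ map addH hr)
       end) H
  end.

(* A budget state: [bp] = Left's dollars; [bhat = true] means state \hat p
   (Left holds the tie-breaking marker), [bhat = false] means state p
   (Right holds the marker). *)
Record bstate := BState { bp : nat; bhat : bool }.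

(* A player who wins
   a bid but has no option loses. *)
Fixpoint lwins (TB : nat) (G : game) (s : bstate) {struct G} : bool :=
  let p := bp s in
  let lmove (nexts : seq bstate) :=
      has (fun GL => has (fun s' => lwins TB GL s') nexts) (lopts G) in
  let rmove (nexts : seq bstate) :=
      all (fun GR => all (fun s' => lwins TB GR s') nexts) (ropts G) in
  has (fun l =>
    all (fun r =>
      if bhat s then
        if r < l then lmove [:: BState (p - l) true; BState (p - l) false]
        else if l == r then lmove [:: BState (p - l) false]
        else rmove [:: BState (p + r) true]
      else
        if l < r then rmove [:: BState (p + r) false; BState (p + r) true]
        else if l == r then rmove [:: BState (p + r) true]
        else lmove [:: BState (p - l) false])
      (iota 0 (TB - p).+1))
    (iota 0 p.+1).

Inductive outcome := OL | OR.
Definition outcome_le (a b : outcome) : bool :=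
  match a, b with OL, OR => false | _, _ => true end.

Definition o (TB : nat) (G : game) (s : bstate) : outcome :=
  if lwins TB G s then OL else OR.

Definition game_ge (TB : nat) (G H : game) : Prop :=
  forall (X : game) (p : nat) (hat : bool), p <= TB ->
    outcome_le (o TB (gadd H X) (BState p hat)) (o TB (gadd G X) (BState p hat)).

Definition game_eq (TB : nat) (G H : game) : Prop :=
  game_ge TB G H /\ game_ge TB H G.

From HB Require Import structures.
From mathcomp Require Import all_boot zify.
Set Implicit Arguments. Unset Strict Implicit. Unset Printing Implicit Defensive.

(* Write D for 1/2^k + conj (1/2^k). We show that adding D to any X neither
   creates nor destroys a Left win from any budget state. Since [lwins] is an
   exists-forall condition and determinacy is not available, Left wins and
   Right wins are transferred by two separate, mirror-image arguments.

   Call a state t at least as good for Left as s ([state_le s t]) when Left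
   has more dollars in t, or the same dollars and the marker whenever she has
   it in s. The induction (on X and on the dyadic exponent) carries stronger
   claims: 1/2^j and 1/2^i - 1/2^j (i < j) transfer Left wins from s to every
   such t. A game A does so as soon as its Right options and the sums with the
   options of X do, and A has a Left option as good as passing: Left copies
   her winning bid in X, uses the pass move to win a zero tie when she gains
   the marker, and outbids her X-bid by one when she gains a dollar instead. *)

Fixpoint game_nested_ind (P : game -> Prop)
  (IH : forall l r, (forall x, List.In x l -> P x) -> (forall x, List.In x r -> P x) ->
        P (Game l r))
  (G : game) {struct G} : P G :=
  let fix all_in (s : seq game) : forall x, List.In x s -> P x :=
    match s with
    | [::] => fun x (hx : False) => False_ind _ hx
    | y :: s' => fun x hx =>
        match hx with
        | or_introl e => eq_ind y P (game_nested_ind IH y) x e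
        | or_intror h => all_in s' x h
        end
    end in
  let: Game l r := G in IH l r (all_in l) (all_in r).

Fixpoint game_tree (G : game) : GenTree.tree unit :=
  let: Game l r := G in GenTree.Node (size l) (map game_tree l ++ map game_tree r).

Fixpoint tree_game (t : GenTree.tree unit) : game :=
  if t is GenTree.Node n ts then
    let gs := map tree_game ts in Game (take n gs) (drop n gs)
  else zero.

Lemma game_treeK : cancel game_tree tree_game.
Proof.
have map_idK (s : seq game) :
    (forall x, List.In x s -> tree_game (game_tree x) = x) -> map tree_game (map game_tree s) = s.
  by elim: s => //= x s IHs xsK; rewrite xsK ?IHs // => [y ys|]; [apply: xsK; right | left].
elim/game_nested_ind => l r IHl IHr /=.
by rewrite map_cat !map_idK // take_size_cat // drop_size_cat.
Qed.

HB.instance Definition _ := Equality.copy game (pcan_type (can_pcan game_treeK)).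

Lemma mem_In (s : seq game) x : x \in s -> List.In x s.
Proof. by elim: s => //= y s IHs; rewrite inE => /orP[/eqP->|/IHs]; [left|right]. Qed.

Lemma game_ind_mem (P : game -> Prop) :
  (forall l r, {in l, forall x, P x} -> {in r, forall x, P x} -> P (Game l r)) ->
  forall G, P G.
Proof. by move=> IH; elim/game_nested_ind => l r IHl IHr; apply: IH => x /mem_In; auto. Qed.

Definition bstate_pair (s : bstate) := (bp s, bhat s).
Lemma bstate_pairK : cancel bstate_pair (fun x => BState x.1 x.2). Proof. by case. Qed.
HB.instance Definition _ := Equality.copy bstate (can_type bstate_pairK).

Lemma lopts_gadd A X :
  lopts (gadd A X) = map (gadd^~ X) (lopts A) ++ map (gadd A) (lopts X).
Proof. by case: A; case: X. Qed.

Lemma ropts_gadd A X :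
  ropts (gadd A X) = map (gadd^~ X) (ropts A) ++ map (gadd A) (ropts X).
Proof. by case: A; case: X. Qed.

Lemma add0g : left_id zero gadd.
Proof.
elim/game_ind_mem => l r IHl IHr /=.
by rewrite -[in RHS](map_id_in IHl) -[in RHS](map_id_in IHr).
Qed.

Lemma addg0 : right_id zero gadd.
Proof.
by elim/game_ind_mem => l r IHl IHr /=; rewrite !cats0 (map_id_in IHl) (map_id_in IHr).
Qed.

Lemma lopts_dyad j : lopts (dyad j) = [:: zero]. Proof. by case: j. Qed.
Lemma ropts_conj_dyad j : ropts (conj (dyad j)) = [:: zero]. Proof. by case: j. Qed.

Lemma mem_ropts_dyad a i : a \in ropts (dyad i) -> exists2 i', i = i'.+1 & a = dyad i'.
Proof. by case: i => [|i] //; rewrite mem_seq1 => /eqP->; exists i. Qed.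

Lemma mem_lopts_conj_dyad a j :
  a \in lopts (conj (dyad j)) -> exists2 j', j = j'.+1 & a = conj (dyad j').
Proof. by case: j => [|j] //; rewrite mem_seq1 => /eqP->; exists j. Qed.

Definition state_le : rel bstate :=
  fun s t => (bp s < bp t) || (bp s == bp t) && (bhat s ==> bhat t).
Definition state_eq : rel bstate :=
  fun s t => (bp s == bp t) && (bhat s == bhat t).

Lemma state_eq_refl : reflexive state_eq.
Proof. by move=> s; rewrite /state_eq !eqxx. Qed.

Lemma state_eq_le : subrel state_eq state_le.
Proof.
by move=> s t; rewrite /state_eq /state_le => /andP[/eqP-> /eqP->]; rewrite eqxx implybb orbT.
Qed.

Section Bidding.

Variable TB : nat.
Local Notation wins := (lwins TB).

Definition lmove G ns := has (fun GL => has (wins GL) ns) (lopts G).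
Definition rmove G ns := all (fun GR => all (wins GR) ns) (ropts G).

Definition resolve G s l r :=
  let p := bp s in
  if bhat s then
    if r < l then lmove G [:: BState (p - l) true; BState (p - l) false]
    else if l == r then lmove G [:: BState (p - l) false]
    else rmove G [:: BState (p + r) true]
  else
    if l < r then rmove G [:: BState (p + r) false; BState (p + r) true]
    else if l == r then rmove G [:: BState (p + r) true]
    else lmove G [:: BState (p - l) false].

Lemma lwinsE G s : wins G s =
  has (fun l => all (resolve G s l) (iota 0 (TB - bp s).+1)) (iota 0 (bp s).+1).
Proof. by case: G. Qed.

Lemma lwinsP G s :
  reflect (exists2 l, l <= bp s & forall r, r <= TB - bp s -> resolve G s l r) (wins G s).
Proof.
rewrite lwinsE; apply: (iffP hasP) => [[l] | [l hl res]].
  rewrite mem_iota => hl /allP res; exists l => // r hr.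
  by apply: res; rewrite mem_iota.
by exists l; [rewrite mem_iota | apply/allP => r; rewrite mem_iota => /res].
Qed.

Lemma lwinsPn G s :
  reflect (forall l, l <= bp s -> exists2 r, r <= TB - bp s & ~~ resolve G s l r)
          (~~ wins G s).
Proof.
rewrite lwinsE -all_predC; apply: (iffP allP) => [res l hl | res l].
  have : ~~ all (resolve G s l) (iota 0 (TB - bp s).+1) by apply: res; rewrite mem_iota.
  by rewrite -has_predC => /hasP[r]; rewrite mem_iota; exists r.
rewrite mem_iota => hl; have [r hr nres] := res l hl.
by apply/negP => /allP allr; rewrite allr ?mem_iota in nres.
Qed.

Definition incr_budget s := BState (bp s).+1 (bhat s).

Lemma lmove_incr_budget G ns :
  {in lopts G, forall x s, bp s < TB -> wins x s -> wins x (incr_budget s)} ->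
  all (fun s => bp s < TB) ns -> lmove G ns -> lmove G (map incr_budget ns).
Proof.
move=> IH /allP ns_TB /hasP[x xG /hasP[s sns win]]; apply/hasP; exists x => //.
by apply/hasP; exists (incr_budget s); [apply: map_f | apply: IH => //; apply: ns_TB].
Qed.

Lemma rmove_incr_budget G ns :
  {in ropts G, forall x s, bp s < TB -> wins x s -> wins x (incr_budget s)} ->
  all (fun s => bp s < TB) ns -> rmove G ns -> rmove G (map incr_budget ns).
Proof.
move=> IH /allP ns_TB /allP win; apply/allP => x xG; rewrite all_map; apply/allP => s sns.
by apply: IH => //; [apply: ns_TB | move/allP: (win x xG); apply].
Qed.

Lemma lwins_incr_budget G s : bp s < TB -> wins G s -> wins G (incr_budget s).
Proof.
elim/game_ind_mem: G s => gl gr IHl IHr [p h] hp /lwinsP[l hl res]; rewrite /= in hp hl.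
apply/lwinsP; exists l => [|r /= hr]; first exact: leqW.
have := res r (leq_trans hr (leq_sub2l _ (leqnSn p))).
rewrite /resolve /=; have -> : p.+1 - l = (p - l).+1 by lia.
rewrite addSn; case: h {res}; case: ltngtP => c H;
  first [apply: (lmove_incr_budget _ _ H) | apply: (rmove_incr_budget _ _ H)] => //=; lia.
Qed.

Lemma lwins_budget_le G p q h :
  p <= q -> q <= TB -> wins G (BState p h) -> wins G (BState q h).
Proof.
elim: q => [|q IHq] pq qTB; first by move: pq; rewrite leqn0 => /eqP->.
rewrite leq_eqVlt in pq; case/orP: pq => [/eqP-> // | pq win].
exact: (lwins_incr_budget (s := BState q h)) (IHq pq (ltnW qTB) win).
Qed.

Definition lwin_transfer (R : rel bstate) A X :=
  forall s t, R s t -> bp t <= TB -> wins X s -> wins (gadd A X) t.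
Definition rwin_transfer (R : rel bstate) A X :=
  forall s t, R s t -> bp t <= TB -> ~~ wins X t -> ~~ wins (gadd A X) s.

Definition lpass A X := exists2 a, a \in lopts A & lwin_transfer state_eq a X.
Definition rpass A X := exists2 a, a \in ropts A & rwin_transfer state_eq a X.

Lemma lwin_transfer_sub R1 R2 A X :
  subrel R1 R2 -> lwin_transfer R2 A X -> lwin_transfer R1 A X.
Proof. by move=> R12 tr s t /R12; apply: tr. Qed.

Lemma rwin_transfer_sub R1 R2 A X :
  subrel R1 R2 -> rwin_transfer R2 A X -> rwin_transfer R1 A X.
Proof. by move=> R12 tr s t /R12; apply: tr. Qed.

Lemma lwin_transfer0 X : lwin_transfer state_eq zero X.
Proof. by case=> p h [q g]; rewrite add0g => /andP[/eqP/= <- /eqP/= <-]. Qed.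

Lemma rwin_transfer0 X : rwin_transfer state_eq zero X.
Proof. by case=> p h [q g]; rewrite add0g => /andP[/eqP/= <- /eqP/= <-]. Qed.

Lemma lmove_add R A X ns ns' :
  {in lopts X, forall x, lwin_transfer R A x} ->
  all (fun s => has (fun t => R s t && (bp t <= TB)) ns') ns ->
  lmove X ns -> lmove (gadd A X) ns'.
Proof.
move=> trX /allP cover /hasP[x xX /hasP[s sns win]].
have /hasP[t tns' /andP[Rst tTB]] := cover s sns.
apply/hasP; exists (gadd A x); first by rewrite lopts_gadd mem_cat map_f ?orbT.
by apply/hasP; exists t => //; apply: trX win.
Qed.

Lemma lmove_addl A X a ns t :
  a \in lopts A -> t \in ns -> wins (gadd a X) t -> lmove (gadd A X) ns.
Proof.
move=> aA tns win; apply/hasP; exists (gadd a X).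
  by rewrite lopts_gadd mem_cat (map_f (gadd^~ X) aA).
by apply/hasP; exists t.
Qed.

Lemma rmove_add R A X s ns ns' :
  {in ropts A, forall a, lwin_transfer state_le a X} -> wins X s ->
  {in ropts X, forall x, lwin_transfer R A x} ->
  all (fun t => [&& state_le s t, bp t <= TB & has (R^~ t) ns]) ns' ->
  rmove X ns -> rmove (gadd A X) ns'.
Proof.
move=> trA win trX /allP cover /allP winX; apply/allP => g; rewrite ropts_gadd mem_cat.
case/orP=> /mapP[y yo ->]; apply/allP => t tns';
  have /and3P[st tTB /hasP[s' s'ns Rst]] := cover t tns'.
  exact: trA win.
by apply: (trX y yo s' t Rst tTB); move/allP: (winX y yo); apply.
Qed.

Lemma nlmove_add R A X s ns ns' :
  {in lopts A, forall a, rwin_transfer state_le a X} -> ~~ wins X s -> bp s <= TB ->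
  {in lopts X, forall x, rwin_transfer R A x} ->
  all (fun s' => state_le s' s && has (fun t => R s' t && (bp t <= TB)) ns) ns' ->
  ~~ lmove X ns -> ~~ lmove (gadd A X) ns'.
Proof.
move=> trA nwin sTB trX /allP cover nwinX; apply/hasPn => g; rewrite lopts_gadd mem_cat.
case/orP=> /mapP[y yo ->]; apply/hasPn => s' s'ns';
  have /andP[s's /hasP[t tns /andP[Rst tTB]]] := cover s' s'ns'.
  exact: trA nwin.
apply: trX Rst tTB _ => //; apply: contra nwinX => win.
by apply/hasP; exists y => //; apply/hasP; exists t.
Qed.

Lemma nrmove_add R A X ns ns' :
  {in ropts X, forall x, rwin_transfer R A x} ->
  all (fun t => (bp t <= TB) && has (R^~ t) ns') ns ->
  ~~ rmove X ns -> ~~ rmove (gadd A X) ns'.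
Proof.
move=> trX /allP cover /allPn[x xX /allPn[t tns nwin]].
have /andP[tTB /hasP[s sns' Rst]] := cover t tns.
apply/allPn; exists (gadd A x); first by rewrite ropts_gadd mem_cat map_f ?orbT.
by apply/allPn; exists s => //; apply: trX nwin.
Qed.

Lemma nrmove_addl A X a ns s :
  a \in ropts A -> s \in ns -> ~~ wins (gadd a X) s -> ~~ rmove (gadd A X) ns.
Proof.
move=> aA sns nwin; apply/allPn; exists (gadd a X).
  by rewrite ropts_gadd mem_cat (map_f (gadd^~ X) aA).
by apply/allPn; exists s.
Qed.

Local Ltac solve_cover :=
  rewrite /= /state_le /state_eq /= ?eqb_id ?eqbF_neg /=; lia.

Lemma state_le_closure (Q : bstate -> bstate -> Prop) :
  (forall s, bp s <= TB -> Q s s) ->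
  (forall p, p <= TB -> Q (BState p false) (BState p true)) ->
  (forall p, p < TB -> Q (BState p true) (BState p.+1 false)) ->
  (forall p q h t, p <= q -> q <= TB -> Q (BState q h) t -> Q (BState p h) t) ->
  (forall s p q h, p <= q -> q <= TB -> Q s (BState p h) -> Q s (BState q h)) ->
  forall s t, state_le s t -> bp t <= TB -> Q s t.
Proof.
move=> refl marker dollar monoL monoR [p h] [q g] /orP[/= pq | /andP[/eqP/= <- hg]] /= qTB.
  case: h; case: g.
  - by apply: (monoL _ _ _ _ (ltnW pq) qTB); apply: refl.
  - by apply: (monoR _ _ _ _ pq qTB); apply: dollar; apply: leq_trans qTB.
  - by apply: (monoL _ _ _ _ (ltnW pq) qTB); apply: marker.
  - by apply: (monoL _ _ _ _ (ltnW pq) qTB); apply: refl.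
by case: h g hg => [] [] //= _; [apply: refl | apply: marker | apply: refl].
Qed.

Section LeftTransfer.

Variables A X : game.
Hypothesis trA : {in ropts A, forall a, lwin_transfer state_le a X}.

Lemma lwin_transfer_eq :
  {in lopts X, forall x, lwin_transfer state_eq A x} ->
  {in ropts X, forall x, lwin_transfer state_eq A x} ->
  lwin_transfer state_eq A X.
Proof.
move=> trL trR [p h] [q g] /andP[/eqP/= <- /eqP/= <-] pTB win.
have /lwinsP[l hl res] := win; apply/lwinsP; exists l => // r hr.
move: (res r hr); rewrite /resolve /=.
by case: h win hl hr {res} => win /= hl hr; case: ltngtP => c H;
  first [apply: lmove_add trL _ H | apply: rmove_add trA win trR _ H];
  solve_cover.
Qed.

Lemma lwin_transfer_marker :
  {in lopts X, forall x, lwin_transfer state_eq A x} ->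
  {in ropts X, forall x, lwin_transfer state_eq A x} ->
  lpass A X ->
  forall p, p <= TB -> wins X (BState p false) -> wins (gadd A X) (BState p true).
Proof.
move=> trL trR [a aA tra] p pTB win.
have /lwinsP[l /= hl res] := win; apply/lwinsP; exists l => // r /= hr.
case: (eqVneq l r) => [<- | lr].
  rewrite /resolve /= ltnn eqxx; case: (posnP l) => [-> | l0].
    apply: (lmove_addl aA (mem_head _ _)); rewrite subn0.
    exact: (tra _ (BState p false) (state_eq_refl _) pTB win).
  have := res 0 (leq0n _); rewrite /resolve /= (gtn_eqF l0) => H.
  by apply: lmove_add trL _ H; solve_cover.
move: (res r hr); rewrite /resolve /=.
by case: ltngtP lr => // c _ H;
  [apply: rmove_add trA win trR _ H | apply: lmove_add trL _ H];
  solve_cover.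
Qed.

Lemma lwin_transfer_dollar :
  {in lopts X, forall x, lwin_transfer state_le A x} ->
  {in ropts X, forall x, lwin_transfer state_le A x} ->
  forall p, p < TB -> wins X (BState p true) -> wins (gadd A X) (BState p.+1 false).
Proof.
move=> trL trR p pTB win; have /lwinsP[l /= hl res] := win.
have [lTB | TBl] := leqP l (TB - p).
  apply/lwinsP; exists l.+1 => // r /= hr; rewrite /resolve /=.
  have [rl | lr] := leqP r l.
    have := res l lTB; rewrite /resolve /= ltnn eqxx => H.
    case: ltngtP => c; try (exfalso; lia).
    by apply: lmove_add trL _ H; solve_cover.
  have := res r (leq_trans hr (leq_sub2l _ (leqnSn p))); rewrite /resolve /=.
  case: (ltngtP l r) => c1; try (exfalso; lia); move=> H.
  by case: ltngtP => c2; try (exfalso; lia);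
    apply: rmove_add trA win trR _ H; solve_cover.
apply/lwinsP; exists l => [|r /= hr]; first exact: leqW.
have := res 0 (leq0n _); rewrite /resolve /= (leq_ltn_trans (leq0n _) TBl) => H.
case: ltngtP => c; try (exfalso; lia).
by apply: lmove_add trL _ H; solve_cover.
Qed.

Lemma lwin_transfer_le :
  {in lopts X, forall x, lwin_transfer state_le A x} ->
  {in ropts X, forall x, lwin_transfer state_le A x} ->
  lpass A X -> lwin_transfer state_le A X.
Proof.
move=> trL trR pass.
have trLe : {in lopts X, forall x, lwin_transfer state_eq A x}.
  by move=> x /trL; apply: lwin_transfer_sub state_eq_le.
have trRe : {in ropts X, forall x, lwin_transfer state_eq A x}.
  by move=> x /trR; apply: lwin_transfer_sub state_eq_le.
have tr_eq := lwin_transfer_eq trLe trRe.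
move=> s t st tTB.
apply: (state_le_closure (Q := fun s t => wins X s -> wins (gadd A X) t)) st tTB.
- by move=> u uTB; apply: tr_eq (state_eq_refl u) uTB.
- exact: lwin_transfer_marker trLe trRe pass.
- exact: lwin_transfer_dollar trL trR.
- by move=> p q h u pq qTB Hq /(lwins_budget_le pq qTB).
- by move=> u p q h pq qTB Hp /Hp; apply: lwins_budget_le.
Qed.

End LeftTransfer.

Section RightTransfer.

Variables A X : game.
Hypothesis trA : {in lopts A, forall a, rwin_transfer state_le a X}.

Lemma rwin_transfer_eq :
  {in lopts X, forall x, rwin_transfer state_eq A x} ->
  {in ropts X, forall x, rwin_transfer state_eq A x} ->
  rwin_transfer state_eq A X.
Proof.
move=> trL trR [p h] [q g] /andP[/eqP/= <- /eqP/= <-] pTB nwin.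
have /lwinsPn res := nwin; apply/lwinsPn => l hl; have [r hr H] := res l hl.
exists r => //; move: H; rewrite /resolve /=.
by case: h nwin pTB hl hr {res} => nwin pTB /= hl hr; case: ltngtP => c H;
  first [apply: (nlmove_add trA nwin pTB trL _ H) | apply: nrmove_add trR _ H];
  solve_cover.
Qed.

Lemma rwin_transfer_marker :
  {in lopts X, forall x, rwin_transfer state_eq A x} ->
  {in ropts X, forall x, rwin_transfer state_eq A x} ->
  rpass A X ->
  forall p, p <= TB -> ~~ wins X (BState p true) -> ~~ wins (gadd A X) (BState p false).
Proof.
move=> trL trR [a aA tra] p pTB nwin.
have /lwinsPn res := nwin; apply/lwinsPn => l /= hl.
have [r /= hr] := res l hl; rewrite /resolve /=.
case: (ltngtP l r) => c H.
- exists r => //; rewrite /resolve /= c.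
  by apply: nrmove_add trR _ H; solve_cover.
- exists 0 => //; rewrite /resolve /= (gtn_eqF (leq_ltn_trans (leq0n r) c)).
  by apply: (nlmove_add trA nwin pTB trL _ H); solve_cover.
case: (posnP l) => [l0 | l0]; subst r; exists 0 => //; rewrite /resolve /=.
  rewrite l0 addn0; apply: (nrmove_addl aA (mem_head _ _)).
  exact: (tra (BState p true) _ (state_eq_refl _) pTB nwin).
rewrite (gtn_eqF l0).
by apply: (nlmove_add trA nwin pTB trL _ H); solve_cover.
Qed.

Lemma rwin_transfer_dollar :
  {in lopts X, forall x, rwin_transfer state_le A x} ->
  {in ropts X, forall x, rwin_transfer state_le A x} ->
  forall p, p < TB -> ~~ wins X (BState p.+1 false) -> ~~ wins (gadd A X) (BState p true).
Proof.
move=> trL trR p pTB nwin; have /lwinsPn res := nwin.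
apply/lwinsPn => l /= hl.
have [lTB | TBl] := leqP l (TB - p).
  have [r /= hr] := res l.+1 hl; rewrite /resolve /=.
  have [rl | lr] := leqP r l.
    case: ltngtP => c H; try (exfalso; lia).
    exists l; [lia | rewrite /resolve /= ltnn eqxx].
    by apply: (nlmove_add trA nwin pTB trL _ H); solve_cover.
  move=> H; exists r; first lia; move: H; rewrite /resolve /=.
  case: (ltngtP l r) => c1; try (exfalso; lia).
  by case: (ltngtP l.+1 r) => c2 H; try (exfalso; lia);
    apply: nrmove_add trR _ H; solve_cover.
have [r /= hr] := res l (leqW hl); rewrite /resolve /=.
case: ltngtP => c; try (exfalso; lia); move=> H.
exists 0 => //; rewrite /resolve /= (leq_ltn_trans (leq0n _) TBl).
by apply: (nlmove_add trA nwin pTB trL _ H); solve_cover.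
Qed.

Lemma rwin_transfer_le :
  {in lopts X, forall x, rwin_transfer state_le A x} ->
  {in ropts X, forall x, rwin_transfer state_le A x} ->
  rpass A X -> rwin_transfer state_le A X.
Proof.
move=> trL trR pass.
have trLe : {in lopts X, forall x, rwin_transfer state_eq A x}.
  by move=> x /trL; apply: rwin_transfer_sub state_eq_le.
have trRe : {in ropts X, forall x, rwin_transfer state_eq A x}.
  by move=> x /trR; apply: rwin_transfer_sub state_eq_le.
have tr_eq := rwin_transfer_eq trLe trRe.
move=> s t st tTB.
apply: (state_le_closure (Q := fun s t => ~~ wins X t -> ~~ wins (gadd A X) s)) st tTB.
- by move=> u uTB; apply: tr_eq (state_eq_refl u) uTB.
- exact: rwin_transfer_marker trLe trRe pass.
- exact: rwin_transfer_dollar trL trR.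
- by move=> p q h u pq qTB Hq /Hq; apply: contra; apply: lwins_budget_le.
- by move=> u p q h pq qTB Hp nwin; apply: Hp; apply: contra nwin; apply: lwins_budget_le.
Qed.

End RightTransfer.

Lemma dyad_lwin_transfer X j :
  [/\ lwin_transfer state_le (dyad j) X,
      forall i, i < j -> lwin_transfer state_le (gadd (dyad i) (conj (dyad j))) X
    & lwin_transfer state_eq (gadd (dyad j) (conj (dyad j))) X].
Proof.
elim/game_ind_mem: X j => xl xr IHl IHr j; elim/ltn_ind: j => j IHj.
have dyad_le : lwin_transfer state_le (dyad j) (Game xl xr).
  apply: lwin_transfer_le.
  - by move=> a /mem_ropts_dyad[j' jE ->]; rewrite jE in IHj; have [] := IHj j' (ltnSn j').
  - by move=> x /IHl/(_ j)[].
  - by move=> x /IHr/(_ j)[].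
  - by exists zero; [rewrite lopts_dyad mem_head | apply: lwin_transfer0].
have mixed_le i : i < j -> lwin_transfer state_le (gadd (dyad i) (conj (dyad j))) (Game xl xr).
  elim/ltn_ind: i => i IHi ij; apply: lwin_transfer_le.
  - move=> g; rewrite ropts_gadd ropts_conj_dyad mem_cat.
    case/orP=> [/mapP[a /mem_ropts_dyad[i' iE ->] ->] | /mapP[_ /[1!inE] /eqP-> ->]].
      by subst i; apply: IHi (ltnSn i') (ltnW ij).
    by rewrite addg0; have [] := IHj i ij.
  - by move=> x /IHl/(_ j)[_ + _]; apply.
  - by move=> x /IHr/(_ j)[_ + _]; apply.
  - case: j IHj ij {dyad_le IHi} => [//|j] IHj ij.
    exists (gadd (dyad i) (conj (dyad j))).
      by rewrite lopts_gadd mem_cat /= inE eqxx orbT.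
    have [_ mixed dd] := IHj j (ltnSn j).
    rewrite ltnS leq_eqVlt in ij; case/orP: ij => [/eqP-> | ij]; first exact: dd.
    exact: lwin_transfer_sub state_eq_le (mixed i ij).
split=> //; apply: lwin_transfer_eq.
- move=> g; rewrite ropts_gadd ropts_conj_dyad mem_cat.
  case/orP=> [/mapP[a /mem_ropts_dyad[i jE ->] ->] | /mapP[_ /[1!inE] /eqP-> ->]].
    by apply: mixed_le; rewrite jE.
  by rewrite addg0.
- by move=> x /IHl/(_ j)[].
- by move=> x /IHr/(_ j)[].
Qed.

Lemma dyad_rwin_transfer X j :
  [/\ rwin_transfer state_le (conj (dyad j)) X,
      forall i, i < j -> rwin_transfer state_le (gadd (dyad j) (conj (dyad i))) X
    & rwin_transfer state_eq (gadd (dyad j) (conj (dyad j))) X].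
Proof.
elim/game_ind_mem: X j => xl xr IHl IHr j; elim/ltn_ind: j => j IHj.
have conj_le : rwin_transfer state_le (conj (dyad j)) (Game xl xr).
  apply: rwin_transfer_le.
  - by move=> a /mem_lopts_conj_dyad[j' jE ->]; rewrite jE in IHj; have [] := IHj j' (ltnSn j').
  - by move=> x /IHl/(_ j)[].
  - by move=> x /IHr/(_ j)[].
  - by exists zero; [rewrite ropts_conj_dyad mem_head | apply: rwin_transfer0].
have mixed_le i : i < j -> rwin_transfer state_le (gadd (dyad j) (conj (dyad i))) (Game xl xr).
  elim/ltn_ind: i => i IHi ij; apply: rwin_transfer_le.
  - move=> g; rewrite lopts_gadd lopts_dyad mem_cat.
    case/orP=> [/mapP[_ /[1!inE] /eqP-> ->] | /mapP[a /mem_lopts_conj_dyad[i' iE ->] ->]].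
      by rewrite add0g; have [] := IHj i ij.
    by subst i; apply: IHi (ltnSn i') (ltnW ij).
  - by move=> x /IHl/(_ j)[_ + _]; apply.
  - by move=> x /IHr/(_ j)[_ + _]; apply.
  - case: j IHj ij {conj_le IHi} => [//|j] IHj ij.
    exists (gadd (dyad j) (conj (dyad i))).
      by rewrite ropts_gadd mem_cat /= inE eqxx.
    have [_ mixed dd] := IHj j (ltnSn j).
    rewrite ltnS leq_eqVlt in ij; case/orP: ij => [/eqP-> | ij]; first exact: dd.
    exact: rwin_transfer_sub state_eq_le (mixed i ij).
split=> //; apply: rwin_transfer_eq.
- move=> g; rewrite lopts_gadd lopts_dyad mem_cat.
  case/orP=> [/mapP[_ /[1!inE] /eqP-> ->] | /mapP[a /mem_lopts_conj_dyad[i jE ->] ->]].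
    by rewrite add0g.
  by apply: mixed_le; rewrite jE.
- by move=> x /IHl/(_ j)[].
- by move=> x /IHr/(_ j)[].
Qed.

End Bidding.

Lemma lwins_add_dyad_conj TB k X s :
  bp s <= TB -> lwins TB (gadd (gadd (dyad k) (conj (dyad k))) X) s = lwins TB X s.
Proof.
move=> sTB; apply/idP/idP => [|win].
  apply: contraTT => nwin; have [_ _ tr] := dyad_rwin_transfer TB X k.
  exact: tr _ _ (state_eq_refl s) sTB nwin.
by have [_ _ tr] := dyad_lwin_transfer TB X k; apply: tr (state_eq_refl s) sTB win.
Qed.

Theorem mainTheorem17 (TB k : nat) (hk : 1 <= k) :
  game_eq TB (gadd (dyad k) (conj (dyad k))) zero.
Proof. by split=> X p h pTB; rewrite /o add0g lwins_add_dyad_conj //; case: lwins. Qed.
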